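(* Let $\mu\in[-1/3,0]$ and $P\in[0,1]$, and for $\Gamma\in[0,1)$ set \[ B_G^{(2)}(\Gamma):=[-4\Gamma P+2P-2\Gamma+3]+\mu[3-2\Gamma-4P]. \] Then there exists a real number $c<1/2$ such that $B_G^{(2)}(\Gamma)<0$ for every $\Gamma\in[0,1)$ with $\Gamma-\tfrac12>c$, if and only if \[ 1-P<\frac{1+3\mu}{2+4\mu}. \]
   Context: In the application, $\Gamma=\Gamma(k)$ is the fraction of the potential enstrophy spectrum at wavenumber $k$ contained in the upper layer, $P=P(k)$ is the fraction of the energy spectrum at $k$ that is baroclinic, and $\mu\in[-1/3,0]$ is the Ekman extrapolation parameter; $B_G^{(2)}$ is a coefficient in the potential enstrophy dissipation rate spectrum of the asymmetric Ekman term. *)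

From Stdlib Require Import Reals Lra.
Open Scope R_scope.

Definition BG2 (mu P Gamma : R) : R :=
  (- 4 * Gamma * P + 2 * P - 2 * Gamma + 3) + mu * (3 - 2 * Gamma - 4 * P).

(* B_G^{(2)} is affine in Gamma with slope -(4P + 2 + 2 mu) < 0, so it is negative
   on some interval (1 - d, 1) exactly when its value at Gamma = 1,
   namely (1 - P)(2 + 4 mu) - (1 + 3 mu), is negative. *)
From Stdlib Require Import Reals Lra Psatz.
From Coquelicot Require Import Rcomplements.
Open Scope R_scope.

Definition negative_near_one (f : R -> R) : Prop :=
  exists c : R, c < 1/2 /\
    forall Gamma : R, 0 <= Gamma < 1 -> Gamma - 1/2 > c -> f Gamma < 0.

Lemma negative_near_one_affine (f : R -> R) (b k : R) :
  0 < k -> (forall Gamma, f Gamma = b + (1 - Gamma) * k) ->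
  negative_near_one f <-> b < 0.
Proof.
  intros Hk Hf; split.
  - intros [c [Hc Hneg]].
    set (Gamma := (1 + Rmax 0 (c + 1/2)) / 2).
    assert (Hmax : 0 <= Rmax 0 (c + 1/2) < 1).
    { split; [apply Rmax_l | apply Rmax_lub_lt; lra]. }
    assert (HG : f Gamma < 0).
    { apply Hneg; unfold Gamma; [lra |].
      pose proof (Rmax_r 0 (c + 1/2)); lra. }
    rewrite Hf in HG; unfold Gamma in HG; nra.
  - intros Hb.
    assert (Hbk : b / k * k = b) by (field; lra).
    assert (Hbk_neg : b / k < 0).
    { apply Rdiv_neg_pos; assumption. }
    exists (1/2 + b / k); split; [lra |].
    intros Gamma _ HG; rewrite Hf; nra.
Qed.

Lemma BG2_affine (mu P Gamma : R) :
  BG2 mu P Gamma = BG2 mu P 1 + (1 - Gamma) * (4 * P + 2 + 2 * mu).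
Proof. unfold BG2; ring. Qed.

Lemma BG2_at_one (mu P : R) :
  BG2 mu P 1 = (1 - P) * (2 + 4 * mu) - (1 + 3 * mu).
Proof. unfold BG2; ring. Qed.

Theorem proposition6 (mu P : R) :
  -1/3 <= mu <= 0 -> 0 <= P <= 1 ->
  ((exists c : R, c < 1/2 /\
      forall Gamma : R, 0 <= Gamma < 1 -> Gamma - 1/2 > c -> BG2 mu P Gamma < 0)
   <-> 1 - P < (1 + 3 * mu) / (2 + 4 * mu)).
Proof.
  intros Hmu HP.
  change (negative_near_one (BG2 mu P) <-> 1 - P < (1 + 3 * mu) / (2 + 4 * mu)).
  rewrite (negative_near_one_affine (BG2 mu P) (BG2 mu P 1) (4 * P + 2 + 2 * mu));
    [| lra | apply BG2_affine].
  rewrite BG2_at_one, <- Rlt_div_r by lra.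
  lra.
Qed.
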